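(* For a tripos $\mathcal{P}$ the following are equivalent: (i) $\mathcal{P}$ is equivalent to the relative realizability tripos over some relative PCA; (ii) $\mathcal{P}$ has enough $\exists$-prime predicates, and the indexed sub-preorder $\mathsf{prim}(\mathcal{P})$ of $\exists$-prime predicates has finite meets (in each fiber, preserved by reindexing) and a discrete generic predicate.
   Context: An indexed preorder is a pseudofunctor $\mathcal{P}:\mathsf{Set}^{op}\to\mathsf{Ord}$, $u^*=\mathcal{P}(u)$; equivalence is in the locally ordered category of indexed preorders and pseudonatural transformations. A generic predicate is some $\iota\in\mathcal{P}(C)$ with every $\varphi\in\mathcal{P}(B)$ isomorphic to $f^*\iota$ for some $f:B\to C$. A tripos is an indexed preorder whose fibers are Heyting preorders (finite meets and implication right adjoint to $-\wedge a$), preserved by reindexing, in which every $u^*$ has a right adjoint $\forall_u$ satisfying Beck–Chevalley for pullbacks in $\mathsf{Set}$, and which has a generic predicate; a tripos also has existential quantification, i.e. left adjoints $\exists_u\dashv u^*$ satisfying Beck–Chevalley. A predicate $\pi\in\mathcal{P}(I)$ is $\exists$-prime if for all $I\xleftarrow{u}J\xleftarrow{v}K$ and $\varphi\in\mathcal{P}(K)$ with $u^*\pi\le\exists_v\varphi$ there is $s:J\to K$ with $v\circ s=\mathrm{id}_J$ and $u^*\pi\le s^*\varphi$; $\mathcal{P}$ has enough $\exists$-primes if every predicate is isomorphic to $\exists_u\pi$ for some $\exists$-prime $\pi$. A predicate $\delta\in\mathcal{A}(I)$ is discrete if for every surjection $e:K\to J$, function $f:K\to I$ and $\varphi\in\mathcal{A}(J)$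 with $e^*\varphi\le f^*\delta$, there is $g:J\to I$ with $g\circ e=f$. A relative PCA is a triple $(A,\cdot,A_\#)$ where $\cdot:A\times A\rightharpoonup A$ is a partial binary operation (application, associating to the left) and $A_\#\subseteq A$ is closed under application whenever defined and contains elements $\mathsf{k},\mathsf{s}$ with, for all $a,b,c\in A$: $\mathsf{k}\cdot a\cdot b$ defined and equal to $a$; $\mathsf{s}\cdot a\cdot b$ defined; $\mathsf{s}\cdot a\cdot b\cdot c$ defined if and only if $a\cdot c\cdot(b\cdot c)$ is defined, in which case they are equal. Its relative realizability tripos is the indexed preorder $I\mapsto((PA)^I,\le)$, reindexing by precomposition, where $\varphi\le\psi$ iff there exists $e\in A_\#$ such that for all $i\in I$ and $a\in\varphi(i)$, $e\cdot a$ is defined and $e\cdot a\in\psi(i)$. *)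

Set Implicit Arguments.

(** * Indexed preorders (data part of a pseudofunctor Set^op -> Ord) *)
Record IdxPreord : Type := {
  ipred : Type -> Type;
  ile : forall I : Type, ipred I -> ipred I -> Prop;
  ireidx : forall I J : Type, (J -> I) -> ipred I -> ipred J
}.
Arguments ile {_ _} _ _.
Arguments ireidx {_ _ _} _ _.

Section IP.
Variable P : IdxPreord.

Definition iiso {I} (a b : ipred P I) : Prop := ile a b /\ ile b a.

(** The laws making the data a pseudofunctor into preorders (in the locally
    ordered setting, coherence conditions are automatic). *)
Definition indexed_preorder : Prop :=
  (forall I (a : ipred P I), ile a a) /\
  (forall I (a b c : ipred P I), ile a b -> ile b c -> ile a c) /\
  (forall I J (u : J -> I) (a b : ipred P I), ile a b -> ile (ireidx u a) (ireidx u b)) /\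
  (forall I (a : ipred P I), iiso (ireidx (fun i : I => i) a) a) /\
  (forall I J K (u : J -> I) (v : K -> J) (a : ipred P I),
      iiso (ireidx (fun k => u (v k)) a) (ireidx v (ireidx u a))).

Definition is_top {I} (t : ipred P I) : Prop := forall a, ile a t.
Definition is_meet {I} (a b m : ipred P I) : Prop :=
  ile m a /\ ile m b /\ forall x, ile x a -> ile x b -> ile x m.
Definition is_imp {I} (a b c : ipred P I) : Prop :=
  forall x m, is_meet x a m -> (ile x c <-> ile m b).

Definition is_forall {I J} (u : J -> I) (phi : ipred P J) (psi : ipred P I) : Prop :=
  forall chi : ipred P I, ile (ireidx u chi) phi <-> ile chi psi.
Definition is_exists {I J} (u : J -> I) (phi : ipred P J) (psi : ipred P I) : Prop :=
  forall chi : ipred P I, ile psi chi <-> ile phi (ireidx u chi).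

End IP.
Arguments iiso {P I}.
Arguments is_top {P I}.
Arguments is_meet {P I}.
Arguments is_imp {P I}.
Arguments is_forall {P I J}.
Arguments is_exists {P I J}.

(** Pullback squares in Set:
       J' --f'--> J
       |u'        |u
       v          v
       I' --f---> I            *)
Definition is_pullback {I I' J J' : Type} (f : I' -> I) (u : J -> I)
  (f' : J' -> J) (u' : J' -> I') : Prop :=
  (forall x, f (u' x) = u (f' x)) /\
  (forall i j, f i = u j -> exists x, (u' x = i /\ f' x = j) /\
      forall y, u' y = i /\ f' y = j -> y = x).

Section Tripos.
Variable P : IdxPreord.

Definition beck_chevalley_forall : Prop :=
  forall (I I' J J' : Type) (f : I' -> I) (u : J -> I) (f' : J' -> J) (u' : J' -> I'),
    is_pullback f u f' u' ->
    forall (phi : ipred P J) (psi : ipred P I),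
      is_forall u phi psi -> is_forall u' (ireidx f' phi) (ireidx f psi).

Definition beck_chevalley_exists : Prop :=
  forall (I I' J J' : Type) (f : I' -> I) (u : J -> I) (f' : J' -> J) (u' : J' -> I'),
    is_pullback f u f' u' ->
    forall (phi : ipred P J) (psi : ipred P I),
      is_exists u phi psi -> is_exists u' (ireidx f' phi) (ireidx f psi).

Definition has_generic : Prop :=
  exists (C : Type) (iota : ipred P C),
    forall (B : Type) (phi : ipred P B), exists f : B -> C, iiso phi (ireidx f iota).

Definition tripos : Prop :=
  indexed_preorder P /\
  (forall I, exists t : ipred P I, is_top t) /\
  (forall I J (u : J -> I) (t : ipred P I), is_top t -> is_top (ireidx u t)) /\
  (forall I (a b : ipred P I), exists m, is_meet a b m) /\
  (forall I J (u : J -> I) (a b m : ipred P I),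
      is_meet a b m -> is_meet (ireidx u a) (ireidx u b) (ireidx u m)) /\
  (forall I (a b : ipred P I), exists c, is_imp a b c) /\
  (forall I J (u : J -> I) (a b c : ipred P I),
      is_imp a b c -> is_imp (ireidx u a) (ireidx u b) (ireidx u c)) /\
  (forall I J (u : J -> I) (phi : ipred P J), exists psi, is_forall u phi psi) /\
  beck_chevalley_forall /\
  has_generic.

Definition eprime {I : Type} (pi : ipred P I) : Prop :=
  forall (J K : Type) (u : J -> I) (v : K -> J) (phi : ipred P K) (psi : ipred P J),
    is_exists v phi psi ->
    ile (ireidx u pi) psi ->
    exists s : J -> K, (forall j, v (s j) = j) /\ ile (ireidx u pi) (ireidx s phi).

Definition enough_eprimes : Prop :=
  forall (I : Type) (phi : ipred P I),
    exists (J : Type) (u : J -> I) (pi : ipred P J), eprime pi /\ is_exists u pi phi.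

(** Notions for an indexed sub-preorder given by a predicate S on each fibre
    (with the induced order and reindexing). *)
Section Sub.
Variable S : forall {I : Type}, ipred P I -> Prop.

Definition is_top_in {I} (t : ipred P I) : Prop :=
  S t /\ forall a, S a -> ile a t.
Definition is_meet_in {I} (a b m : ipred P I) : Prop :=
  S m /\ ile m a /\ ile m b /\ forall x, S x -> ile x a -> ile x b -> ile x m.

Definition sub_finite_meets : Prop :=
  (forall I, exists t : ipred P I, is_top_in t) /\
  (forall I J (u : J -> I) (t : ipred P I), is_top_in t -> is_top_in (ireidx u t)) /\
  (forall I (a b : ipred P I), S a -> S b -> exists m, is_meet_in a b m) /\
  (forall I J (u : J -> I) (a b m : ipred P I), S a -> S b ->
      is_meet_in a b m -> is_meet_in (ireidx u a) (ireidx u b) (ireidx u m)).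

Definition discrete_in {I} (delta : ipred P I) : Prop :=
  forall (K J : Type) (e : K -> J) (f : K -> I) (phi : ipred P J),
    (forall j, exists k, e k = j) ->
    S phi ->
    ile (ireidx e phi) (ireidx f delta) ->
    exists g : J -> I, forall k, g (e k) = f k.

Definition has_discrete_generic_in : Prop :=
  exists (C : Type) (delta : ipred P C),
    S delta /\
    (forall (B : Type) (phi : ipred P B), S phi -> exists f : B -> C, iiso phi (ireidx f delta)) /\
    discrete_in delta.
End Sub.

End Tripos.
Arguments eprime {P I}.
Arguments is_top_in {P} S {I}.
Arguments is_meet_in {P} S {I}.
Arguments sub_finite_meets {P} S.
Arguments discrete_in {P} S {I}.
Arguments has_discrete_generic_in {P} S.

(** Equivalence of indexed preorders (pseudonatural transformations,
    locally ordered 2-category) *)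
Definition pseudonatural {P Q : IdxPreord} (F : forall I, ipred P I -> ipred Q I) : Prop :=
  (forall I (a b : ipred P I), ile a b -> ile (F I a) (F I b)) /\
  (forall I J (u : J -> I) (a : ipred P I), iiso (F J (ireidx u a)) (ireidx u (F I a))).

Definition ip_equivalent (P Q : IdxPreord) : Prop :=
  exists (F : forall I, ipred P I -> ipred Q I) (G : forall I, ipred Q I -> ipred P I),
    pseudonatural F /\ pseudonatural G /\
    (forall I (a : ipred P I), iiso (G I (F I a)) a) /\
    (forall I (b : ipred Q I), iiso (F I (G I b)) b).

Definition oapp {A : Type} (app : A -> A -> option A) (x y : option A) : option A :=
  match x, y with Some a, Some b => app a b | _, _ => None end.

Definition rel_pca (A : Type) (app : A -> A -> option A) (Ash : A -> Prop) : Prop :=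
  (forall a b c, Ash a -> Ash b -> app a b = Some c -> Ash c) /\
  exists k s, Ash k /\ Ash s /\
    (forall a b : A, oapp app (oapp app (Some k) (Some a)) (Some b) = Some a) /\
    (forall a b : A, oapp app (oapp app (Some s) (Some a)) (Some b) <> None) /\
    (forall a b c : A,
        oapp app (oapp app (oapp app (Some s) (Some a)) (Some b)) (Some c) =
        oapp app (oapp app (Some a) (Some c)) (oapp app (Some b) (Some c))).

Definition rt_le (A : Type) (app : A -> A -> option A) (Ash : A -> Prop)
  (I : Type) (phi psi : I -> A -> Prop) : Prop :=
  exists e, Ash e /\ forall (i : I) (a : A), phi i a -> exists b, app e a = Some b /\ psi i b.

Definition rel_real_tripos (A : Type) (app : A -> A -> option A) (Ash : A -> Prop)
  : IdxPreord :=
  {| ipred := fun I => I -> A -> Prop;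
     ile := rt_le app Ash;
     ireidx := fun I J (u : J -> I) (phi : I -> A -> Prop) => fun j => phi (u j) |}.

(* (i) => (ii): in a relative realizability tripos the singleton predicates
   [i |-> {h i}] are, up to isomorphism, exactly the exists-primes; every predicate
   is the union, i.e. an existential, of singletons; pairing realizes their meets;
   and the identity singleton on [A] is a discrete generic prime.  These
   properties are invariant under equivalence.

   (ii) => (i): let [delta] over [C] be the discrete generic prime and let
   [pr : C * C -> C] classify [delta o fst /\ delta o snd].  Presenting the
   implication [delta o fst => delta o snd] as an existential of a prime, hence of
   some [delta o h], yields codes [e] for the entailments [delta a |- delta b];
   discreteness makes them functional and every uniform entailment has a
   designated code, where [c] is designated when [delta c] holds globally.  These
   codes define an application on [C], sound and complete for the order of [P],
   and every predicate, being an existential of some [delta o h], corresponds to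
   the family of images of [h]; this is an equivalence with the realizability
   tripos over [C]. *)

From Stdlib Require Import Classical ClassicalEpsilon FunctionalExtensionality ProofIrrelevance.

Existing Class indexed_preorder.

Lemma functional_choice {A B : Type} (R : A -> B -> Prop) :
  (forall a, exists b, R a b) -> exists f : A -> B, forall a, R a (f a).
Proof.
  intros H. exists (fun a => proj1_sig (constructive_indefinite_description _ (H a))).
  intros a. exact (proj2_sig (constructive_indefinite_description _ (H a))).
Qed.

Section IndexedPreorder.
Context {P : IdxPreord} {HP : indexed_preorder P}.

Lemma le_refl {I} (a : ipred P I) : ile a a.
Proof. destruct HP as [H _]; apply H. Qed.

Lemma le_trans {I} (a b c : ipred P I) : ile a b -> ile b c -> ile a c.
Proof. destruct HP as [_ [H _]]; apply H. Qed.

Lemma reindex_mono {I J} (u : J -> I) (a b : ipred P I) :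
  ile a b -> ile (ireidx u a) (ireidx u b).
Proof. destruct HP as [_ [_ [H _]]]; apply H. Qed.

Lemma reindex_id {I} (w : I -> I) (a : ipred P I) :
  (forall i, w i = i) -> iiso (ireidx w a) a.
Proof.
  intros Hw. replace w with (fun i : I => i) by (apply functional_extensionality; auto).
  destruct HP as [_ [_ [_ [H _]]]]; apply H.
Qed.

Lemma reindex_comp {I J K} (u : J -> I) (v : K -> J) (w : K -> I) (a : ipred P I) :
  (forall k, w k = u (v k)) -> iiso (ireidx w a) (ireidx v (ireidx u a)).
Proof.
  intros Hw. replace w with (fun k => u (v k)) by (apply functional_extensionality; auto).
  destruct HP as [_ [_ [_ [_ H]]]]; apply H.
Qed.

Lemma reindex_id_drop {I} (w : I -> I) (a : ipred P I) :
  (forall i, w i = i) -> ile (ireidx w a) a.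
Proof. intros H; apply (reindex_id w a H). Qed.

Lemma reindex_id_add {I} (w : I -> I) (a : ipred P I) :
  (forall i, w i = i) -> ile a (ireidx w a).
Proof. intros H; apply (reindex_id w a H). Qed.

Lemma reindex_comp_split {I J K} (u : J -> I) (v : K -> J) (w : K -> I) (a : ipred P I) :
  (forall k, w k = u (v k)) -> ile (ireidx w a) (ireidx v (ireidx u a)).
Proof. intros H; apply (reindex_comp u v w a H). Qed.

Lemma reindex_comp_merge {I J K} (u : J -> I) (v : K -> J) (w : K -> I) (a : ipred P I) :
  (forall k, w k = u (v k)) -> ile (ireidx v (ireidx u a)) (ireidx w a).
Proof. intros H; apply (reindex_comp u v w a H). Qed.

Lemma reindex_retract_add {I J} (s : I -> J) (r : J -> I) (a : ipred P I) :
  (forall i, r (s i) = i) -> ile a (ireidx s (ireidx r a)).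
Proof.
  intros H. eapply le_trans; [apply (reindex_id_add (fun i => r (s i))); auto|].
  apply reindex_comp_split; auto.
Qed.

Lemma reindex_retract_drop {I J} (s : I -> J) (r : J -> I) (a : ipred P I) :
  (forall i, r (s i) = i) -> ile (ireidx s (ireidx r a)) a.
Proof.
  intros H. eapply le_trans; [apply (reindex_comp_merge r s (fun i => r (s i))); auto|].
  apply reindex_id_drop; auto.
Qed.

Lemma iiso_refl {I} (a : ipred P I) : iiso a a.
Proof. split; apply le_refl. Qed.

Lemma iiso_sym {I} (a b : ipred P I) : iiso a b -> iiso b a.
Proof. intros [h1 h2]; split; auto. Qed.

Lemma reindex_iiso {I J} (u : J -> I) (a b : ipred P I) :
  iiso a b -> iiso (ireidx u a) (ireidx u b).
Proof. intros [h1 h2]; split; apply reindex_mono; auto. Qed.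

Lemma exists_unit {I J} (u : J -> I) (phi : ipred P J) (psi : ipred P I) :
  is_exists u phi psi -> ile phi (ireidx u psi).
Proof. intros H. apply H, le_refl. Qed.

Lemma exists_elim {I J} (u : J -> I) (phi : ipred P J) (psi chi : ipred P I) :
  is_exists u phi psi -> ile phi (ireidx u chi) -> ile psi chi.
Proof. intros H; apply H. Qed.

Lemma is_exists_iso_target {I J} (u : J -> I) (phi : ipred P J) (psi psi' : ipred P I) :
  is_exists u phi psi -> iiso psi psi' -> is_exists u phi psi'.
Proof.
  intros H [h1 h2] chi; split; intros Hc.
  - apply H. exact (le_trans _ _ _ h1 Hc).
  - eapply le_trans; [exact h2|]. apply H; auto.
Qed.

Lemma is_exists_iso_source {I J} (u : J -> I) (phi phi' : ipred P J) (psi : ipred P I) :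
  is_exists u phi psi -> iiso phi phi' -> is_exists u phi' psi.
Proof.
  intros H [h1 h2] chi; split; intros Hc.
  - eapply le_trans; [exact h2|]. apply H; auto.
  - apply H. exact (le_trans _ _ _ h1 Hc).
Qed.

Lemma forall_counit {I J} (u : J -> I) (phi : ipred P J) (psi : ipred P I) :
  is_forall u phi psi -> ile (ireidx u psi) phi.
Proof. intros H. apply H, le_refl. Qed.

Lemma forall_intro {I J} (u : J -> I) (phi : ipred P J) (psi chi : ipred P I) :
  is_forall u phi psi -> ile (ireidx u chi) phi -> ile chi psi.
Proof. intros H; apply H. Qed.

Lemma eprime_reindex {I I'} (w : I' -> I) (pi : ipred P I) :
  eprime pi -> eprime (ireidx w pi).
Proof.
  intros Hp J K u v phi psi Hex Hle.
  destruct (Hp J K (fun j => w (u j)) v phi psi Hex) as [s [Hs1 Hs2]].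
  - eapply le_trans; [|exact Hle]. apply reindex_comp_split; auto.
  - exists s; split; auto. eapply le_trans; [|exact Hs2]. apply reindex_comp_merge; auto.
Qed.

Lemma is_meet_in_iso (S : forall I, ipred P I -> Prop) {I} (a b m a' b' m' : ipred P I) :
  is_meet_in S a b m -> iiso a a' -> iiso b b' -> iiso m m' -> S I m' ->
  is_meet_in S a' b' m'.
Proof.
  intros [_ [h1 [h2 h3]]] [i1 i2] [i3 i4] [i5 i6] Sm'. split; [exact Sm'|split; [|split]].
  - exact (le_trans _ _ _ i6 (le_trans _ _ _ h1 i1)).
  - exact (le_trans _ _ _ i6 (le_trans _ _ _ h2 i3)).
  - intros x Sx hx1 hx2. eapply le_trans; [|exact i5]. apply h3; auto.
    + exact (le_trans _ _ _ hx1 i2).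
    + exact (le_trans _ _ _ hx2 i4).
Qed.

Lemma is_top_in_iso (S : forall I, ipred P I -> Prop) {I} (t t' : ipred P I) :
  is_top_in S t -> iiso t t' -> S I t' -> is_top_in S t'.
Proof. intros [_ Ht] [h _] St'. split; [exact St'|]. intros a Sa. exact (le_trans _ _ _ (Ht a Sa) h). Qed.

Lemma is_meet_in_unique (S : forall I, ipred P I -> Prop) {I} (a b m m' : ipred P I) :
  is_meet_in S a b m -> is_meet_in S a b m' -> iiso m m'.
Proof. intros [s [h1 [h2 h3]]] [s' [h1' [h2' h3']]]. split; auto. Qed.

End IndexedPreorder.

Definition PB {I I' J} (f : I' -> I) (u : J -> I) := {p : I' * J | f (fst p) = u (snd p)}.
Definition pb1 {I I' J} {f : I' -> I} {u : J -> I} (p : PB f u) : I' := fst (proj1_sig p).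
Definition pb2 {I I' J} {f : I' -> I} {u : J -> I} (p : PB f u) : J := snd (proj1_sig p).

Lemma pb_comm {I I' J} (f : I' -> I) (u : J -> I) (p : PB f u) : f (pb1 p) = u (pb2 p).
Proof. destruct p as [[x y] h]; exact h. Qed.

Lemma PB_is_pullback {I I' J} (f : I' -> I) (u : J -> I) :
  is_pullback f u (@pb2 _ _ _ f u) (@pb1 _ _ _ f u).
Proof.
  split.
  - intros x; apply pb_comm.
  - intros i j H. exists (exist _ (i, j) H). split; [split; reflexivity|].
    intros [[i' j'] H'] [e1 e2]. unfold pb1, pb2 in *; simpl in *. subst.
    f_equal. apply proof_irrelevance.
Qed.

Lemma is_pullback_sym {I I' J J'} (f : I' -> I) (u : J -> I) (f' : J' -> J) (u' : J' -> I') :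
  is_pullback f u f' u' -> is_pullback u f u' f'.
Proof.
  intros [h1 h2]. split.
  - intros x; symmetry; auto.
  - intros j i e. destruct (h2 i j (eq_sym e)) as [x [[e1 e2] hu]].
    exists x; split; [split; auto|]. intros y [y1 y2]; apply hu; split; auto.
Qed.

Definition map_fst {I J C : Type} (u : J -> I) (y : J * C) : I * C := (u (fst y), snd y).

Section Tripos.
Context {P : IdxPreord} (HT : tripos P).

#[local] Instance tripos_indexed_preorder : indexed_preorder P := proj1 HT.

Lemma tripos_top I : exists t : ipred P I, is_top t.
Proof. apply HT. Qed.
Lemma tripos_top_reindex {I J} (u : J -> I) (t : ipred P I) : is_top t -> is_top (ireidx u t).
Proof. apply HT. Qed.
Lemma tripos_meet {I} (a b : ipred P I) : exists m, is_meet a b m.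
Proof. apply HT. Qed.
Lemma tripos_imp {I} (a b : ipred P I) : exists c, is_imp a b c.
Proof. apply HT. Qed.
Lemma tripos_imp_reindex {I J} (u : J -> I) (a b c : ipred P I) :
  is_imp a b c -> is_imp (ireidx u a) (ireidx u b) (ireidx u c).
Proof. apply HT. Qed.
Lemma tripos_forall {I J} (u : J -> I) (phi : ipred P J) : exists psi, is_forall u phi psi.
Proof. apply HT. Qed.
Lemma tripos_bc_forall : beck_chevalley_forall P.
Proof. apply HT. Qed.
Lemma tripos_generic : has_generic P.
Proof. apply HT. Qed.

Lemma imp_elim {I} (a b c z : ipred P I) : is_imp a b c -> ile z c -> ile z a -> ile z b.
Proof.
  intros H hc ha. destruct (tripos_meet c a) as [m Hm].
  assert (Hmb : ile m b) by (apply (H c m Hm), le_refl).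
  eapply le_trans; [|exact Hmb]. apply Hm; auto.
Qed.

Lemma imp_intro {I} (a b c z : ipred P I) :
  is_imp a b c -> (forall w, ile w z -> ile w a -> ile w b) -> ile z c.
Proof.
  intros H h. destruct (tripos_meet z a) as [m Hm].
  apply (H z m Hm). apply h; apply Hm.
Qed.

Lemma is_imp_iso {I} (a b c a' b' : ipred P I) :
  is_imp a b c -> iiso a a' -> iiso b b' -> is_imp a' b' c.
Proof.
  intros H [h1 h2] [h3 h4] x m [m1 [m2 m3]]. split; intros Hx.
  - eapply le_trans; [|exact h3]. apply (imp_elim a b c m H).
    + exact (le_trans _ _ _ m1 Hx).
    + exact (le_trans _ _ _ m2 h2).
  - apply (imp_intro a b c x H). intros w hw1 hw2.
    eapply le_trans; [|exact h4]. eapply le_trans; [|exact Hx]. apply m3; auto.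
    exact (le_trans _ _ _ hw2 h1).
Qed.

Lemma tripos_bc_exists : beck_chevalley_exists P.
Proof.
  intros I I' J J' f u f' u' Hpb phi psi Hex chi. split; intros Hc.
  - eapply le_trans; [apply reindex_mono, (exists_unit u phi psi Hex)|].
    eapply le_trans; [apply (reindex_comp_merge u f' (fun k => f (u' k)))|].
    { intros k. apply Hpb. }
    eapply le_trans; [apply (reindex_comp_split f u' (fun k => f (u' k))); reflexivity|].
    apply reindex_mono, Hc.
  - (* transpose along f, where Beck-Chevalley for forall applies *)
    destruct (tripos_forall f chi) as [th Hth].
    pose proof (tripos_bc_forall _ _ _ _ u f u' f' (is_pullback_sym _ _ _ _ Hpb) chi th Hth) as Hb.
    assert (Hphi : ile phi (ireidx u th)) by (apply (forall_intro f' _ _ _ Hb); exact Hc).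
    assert (Hpsi : ile psi th) by (apply (exists_elim u phi psi th Hex Hphi)).
    eapply le_trans; [apply reindex_mono, Hpsi|]. apply forall_counit, Hth.
Qed.

Section ExistsFromGeneric.
Context {I J Cg : Type} (u : J -> I) (phi : ipred P J) (iota : ipred P Cg).
Context (rho : ipred P (J * Cg)) (Hrho : is_imp (ireidx fst phi) (ireidx snd iota) rho).
Context (th : ipred P (I * Cg)) (Hth : is_forall (map_fst u) rho th).
Context (ka : ipred P (I * Cg)) (Hka : is_imp th (ireidx snd iota) ka).
Context (psi : ipred P I) (Hpsi : is_forall fst ka psi).

Lemma exists_generic_unit : ile phi (ireidx u psi).
Proof.
  assert (Hpb : is_pullback u (@fst I Cg) (map_fst u) (@fst J Cg)).
  { split; [reflexivity|].
    intros j [i c] e. exists (j, c). split; [split; [reflexivity|]|].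
    - unfold map_fst; simpl in *. rewrite e. reflexivity.
    - intros [j' c'] [e1 e2]. unfold map_fst in e2; simpl in *. subst. congruence. }
  pose proof (tripos_bc_forall _ _ _ _ u fst (map_fst u) fst Hpb ka psi Hpsi) as Hb.
  apply (forall_intro _ _ _ _ Hb).
  apply (imp_intro _ _ _ _ (tripos_imp_reindex (map_fst u) _ _ _ Hka)). intros z hz1 hz2.
  eapply le_trans; [|apply (reindex_comp_split snd (map_fst u) snd); reflexivity].
  apply (imp_elim _ _ rho z Hrho); auto.
  exact (le_trans _ _ _ hz2 (forall_counit _ _ _ Hth)).
Qed.

Lemma exists_generic_elim (f : I -> Cg) (chi : ipred P I) :
  iiso chi (ireidx f iota) -> ile phi (ireidx u chi) -> ile psi chi.
Proof.
  intros Hf Hc.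
  (* evaluate at the graph i |-> (i, f i) of the classifying map of chi *)
  set (s := fun i : I => (i, f i)).
  set (f' := fun j : J => (j, f (u j))).
  assert (Hpb : is_pullback s (map_fst u) f' u).
  { split; [reflexivity|].
    intros i [j c] e. unfold s, map_fst in e; simpl in e. injection e as e1 e2.
    exists j. split; [split; [auto|]|].
    - unfold f'. subst. reflexivity.
    - intros j' [_ e4]. unfold f' in e4. injection e4; auto. }
  pose proof (tripos_bc_forall _ _ _ _ s (map_fst u) f' u Hpb rho th Hth) as Hb.
  assert (Hsth : ile psi (ireidx s th)).
  { apply (forall_intro _ _ _ _ Hb).
    apply (imp_intro _ _ _ _ (tripos_imp_reindex f' _ _ _ Hrho)). intros z _ hz.
    eapply le_trans; [|apply (reindex_comp_split snd f' (fun j => f (u j))); reflexivity].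
    eapply le_trans; [|apply (reindex_comp_merge f u (fun j => f (u j))); reflexivity].
    eapply le_trans; [|apply reindex_mono, Hf].
    eapply le_trans; [|exact Hc].
    eapply le_trans; [exact hz|]. apply (reindex_retract_drop f' fst); reflexivity. }
  assert (Hska : ile psi (ireidx s ka)).
  { eapply le_trans; [apply (reindex_retract_add s fst); reflexivity|].
    apply reindex_mono, forall_counit, Hpsi. }
  eapply le_trans; [exact (imp_elim _ _ _ psi (tripos_imp_reindex s _ _ _ Hka) Hska Hsth)|].
  eapply le_trans; [apply (reindex_comp_merge snd s f); reflexivity|]. apply Hf.
Qed.

End ExistsFromGeneric.

Lemma tripos_exists {I J} (u : J -> I) (phi : ipred P J) : exists psi, is_exists u phi psi.
Proof.
  destruct tripos_generic as [Cg [iota Hgen]].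
  destruct (tripos_imp (ireidx (@fst J Cg) phi) (ireidx snd iota)) as [rho Hrho].
  destruct (tripos_forall (map_fst u) rho) as [th Hth].
  destruct (tripos_imp th (ireidx (@snd I Cg) iota)) as [ka Hka].
  destruct (tripos_forall fst ka) as [psi Hpsi].
  exists psi. intros chi. split; intros Hc.
  - eapply le_trans; [exact (exists_generic_unit u phi iota rho Hrho th Hth ka Hka psi Hpsi)|].
    apply reindex_mono, Hc.
  - destruct (Hgen I chi) as [f Hf].
    exact (exists_generic_elim u phi iota rho Hrho th Hth ka Hka psi Hpsi f chi Hf Hc).
Qed.

End Tripos.

(** * Invariance under equivalence *)

Definition is_equivalence {P Q : IdxPreord}
  (F : forall I, ipred P I -> ipred Q I) (G : forall I, ipred Q I -> ipred P I) : Prop :=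
  pseudonatural F /\ pseudonatural G /\
  (forall I a, iiso (G I (F I a)) a) /\ (forall I b, iiso (F I (G I b)) b).

Lemma is_equivalence_sym {P Q : IdxPreord} F G :
  @is_equivalence P Q F G -> is_equivalence G F.
Proof. intros [HF [HG [HGF HFG]]]. split; [exact HG|split; [exact HF|split; assumption]]. Qed.

Section Equivalence.
Context {P Q : IdxPreord} {HP : indexed_preorder P} {HQ : indexed_preorder Q}.
Context {F : forall I, ipred P I -> ipred Q I} {G : forall I, ipred Q I -> ipred P I}.
Context (HFG : is_equivalence F G).

Lemma equiv_mono {I} (a b : ipred P I) : ile a b -> ile (F I a) (F I b).
Proof. apply HFG. Qed.

Lemma equiv_reindex_l {I J} (u : J -> I) (a : ipred P I) :
  ile (F J (ireidx u a)) (ireidx u (F I a)).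
Proof. apply HFG. Qed.

Lemma equiv_reindex_r {I J} (u : J -> I) (a : ipred P I) :
  ile (ireidx u (F I a)) (F J (ireidx u a)).
Proof. apply HFG. Qed.

Lemma equiv_unit_iso {I} (a : ipred P I) : iiso (G I (F I a)) a.
Proof. apply HFG. Qed.

Lemma equiv_adj_l {I} (a : ipred P I) (b : ipred Q I) : ile (F I a) b -> ile a (G I b).
Proof.
  intros H. destruct HFG as [_ [HG [HGF _]]].
  eapply le_trans; [apply HGF|]. apply HG, H.
Qed.

Lemma equiv_adj_r {I} (a : ipred P I) (b : ipred Q I) : ile a (G I b) -> ile (F I a) b.
Proof.
  intros H. destruct HFG as [_ [_ [_ HFG']]].
  eapply le_trans; [apply equiv_mono, H|]. apply HFG'.
Qed.

End Equivalence.

Section EquivalenceExists.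
Context {P Q : IdxPreord} {HP : indexed_preorder P} {HQ : indexed_preorder Q}.
Context {F : forall I, ipred P I -> ipred Q I} {G : forall I, ipred Q I -> ipred P I}.
Context (HFG : is_equivalence F G).
Let HGF := is_equivalence_sym F G HFG.

Lemma equiv_reindex_inverse {I J} (u : J -> I) (b : ipred Q I) :
  iiso (F J (ireidx u (G I b))) (ireidx u b).
Proof.
  split.
  - eapply le_trans; [apply (equiv_reindex_l HFG)|].
    apply reindex_mono, (equiv_adj_r HFG), le_refl.
  - apply (equiv_adj_l HGF), (equiv_reindex_l HGF).
Qed.

Lemma equiv_exists {I J} (v : J -> I) phi psi :
  is_exists v phi psi -> is_exists v (F J phi) (F I psi).
Proof.
  intros H chi. split; intros Hc.
  - apply (equiv_adj_r HFG). eapply le_trans; [|apply (equiv_reindex_r HGF)].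
    eapply le_trans; [apply (exists_unit _ _ _ H)|].
    apply reindex_mono, (equiv_adj_l HFG), Hc.
  - apply (equiv_adj_r HFG), (exists_elim _ _ _ _ H).
    eapply le_trans; [apply (equiv_adj_l HFG), Hc|]. apply (equiv_reindex_l HGF).
Qed.

End EquivalenceExists.

Section EquivalencePrimes.
Context {P Q : IdxPreord} {HP : indexed_preorder P} {HQ : indexed_preorder Q}.
Context {F : forall I, ipred P I -> ipred Q I} {G : forall I, ipred Q I -> ipred P I}.
Context (HFG : is_equivalence F G).
Let HGF := is_equivalence_sym F G HFG.

Lemma equiv_eprime {I} (pi : ipred P I) : eprime pi -> eprime (F I pi).
Proof.
  intros Hp J K u v phi psi Hex Hle.
  destruct (Hp J K u v (G K phi) (G J psi) (equiv_exists HGF _ _ _ Hex)) as [s [Hs1 Hs2]].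
  { apply (equiv_adj_l HFG). eapply le_trans; [apply (equiv_reindex_l HFG)|exact Hle]. }
  exists s. split; auto.
  eapply le_trans; [apply (equiv_reindex_r HFG)|].
  eapply le_trans; [apply (equiv_mono HFG), Hs2|]. apply (equiv_reindex_inverse HFG).
Qed.

End EquivalencePrimes.

Section EquivalenceSubPreorder.
Context {P Q : IdxPreord} {HP : indexed_preorder P} {HQ : indexed_preorder Q}.
Context {F : forall I, ipred P I -> ipred Q I} {G : forall I, ipred Q I -> ipred P I}.
Context (HFG : is_equivalence F G).
Let HGF := is_equivalence_sym F G HFG.

Lemma equiv_is_top_in {I} (t : ipred P I) :
  is_top_in (@eprime P) t -> is_top_in (@eprime Q) (F I t).
Proof.
  intros [Ht Htop]. split; [apply (equiv_eprime HFG), Ht|].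
  intros b Hb. apply (equiv_adj_l HGF), Htop, (equiv_eprime HGF), Hb.
Qed.

Lemma equiv_is_meet_in {I} (a b m : ipred P I) :
  is_meet_in (@eprime P) a b m -> is_meet_in (@eprime Q) (F I a) (F I b) (F I m).
Proof.
  intros [Hm [Hma [Hmb Hglb]]].
  split; [apply (equiv_eprime HFG), Hm|split; [apply (equiv_mono HFG), Hma|split]].
  - apply (equiv_mono HFG), Hmb.
  - intros y Hy Hya Hyb. apply (equiv_adj_l HGF), Hglb.
    + apply (equiv_eprime HGF), Hy.
    + apply (equiv_adj_r HGF), Hya.
    + apply (equiv_adj_r HGF), Hyb.
Qed.

Lemma equiv_generic_in {C} (d : ipred P C) :
  (forall B (phi : ipred P B), eprime phi -> exists f : B -> C, iiso phi (ireidx f d)) ->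
  forall B (phi : ipred Q B), eprime phi -> exists f : B -> C, iiso phi (ireidx f (F C d)).
Proof.
  intros Hgen B phi Hphi. destruct (Hgen B (G B phi) (equiv_eprime HGF _ Hphi)) as [f [Hf1 Hf2]].
  exists f. split.
  - eapply le_trans; [apply (equiv_adj_l HGF), Hf1|]. apply (equiv_reindex_l HFG).
  - eapply le_trans; [apply (equiv_reindex_r HFG)|]. apply (equiv_adj_r HFG), Hf2.
Qed.

Lemma equiv_discrete_in {C} (d : ipred P C) :
  discrete_in (@eprime P) d -> discrete_in (@eprime Q) (F C d).
Proof.
  intros Hd K J e f phi He Hphi Hle. apply (Hd K J e f (G J phi) He (equiv_eprime HGF _ Hphi)).
  eapply le_trans; [apply (equiv_reindex_r HGF)|].
  eapply le_trans; [apply (equiv_mono HGF), Hle|]. apply (equiv_reindex_inverse HGF).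
Qed.

End EquivalenceSubPreorder.

Definition realizability_conditions (P : IdxPreord) : Prop :=
  enough_eprimes P /\ sub_finite_meets (@eprime P) /\ has_discrete_generic_in (@eprime P).

Lemma realizability_conditions_transfer {P Q : IdxPreord}
  {HP : indexed_preorder P} {HQ : indexed_preorder Q} F G :
  @is_equivalence P Q F G -> realizability_conditions Q -> realizability_conditions P.
Proof.
  intros HFG [Hen [[Htop [Htop_rx [Hmeet Hmeet_rx]]] [C [d [Hd [Hgen Hdisc]]]]]].
  pose proof (is_equivalence_sym F G HFG) as HGF.
  split; [|split; [split; [|split; [|split]]|]].
  - intros I phi. destruct (Hen I (F I phi)) as [J [u [pi [Hpi Hex]]]].
    exists J, u, (G J pi). split; [apply (equiv_eprime HGF), Hpi|].
    eapply is_exists_iso_target; [apply (equiv_exists HGF), Hex|]. apply (equiv_unit_iso HFG).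
  - intros I. destruct (Htop I) as [t Ht]. exists (G I t). apply (equiv_is_top_in HGF), Ht.
  - intros I J u t Ht. apply (is_top_in_iso _ (G J (ireidx u (F I t)))).
    + apply (equiv_is_top_in HGF), Htop_rx, (equiv_is_top_in HFG), Ht.
    + apply (equiv_reindex_inverse HGF).
    + apply eprime_reindex, Ht.
  - intros I a b Ha Hb.
    destruct (Hmeet I (F I a) (F I b) (equiv_eprime HFG _ Ha) (equiv_eprime HFG _ Hb)) as [m Hm].
    exists (G I m). eapply is_meet_in_iso; [apply (equiv_is_meet_in HGF), Hm| | |apply iiso_refl|].
    + apply (equiv_unit_iso HFG).
    + apply (equiv_unit_iso HFG).
    + apply (equiv_eprime HGF), Hm.
  - intros I J u a b m Ha Hb Hm.
    pose proof (Hmeet_rx I J u _ _ _ (equiv_eprime HFG _ Ha) (equiv_eprime HFG _ Hb)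
                  (equiv_is_meet_in HFG _ _ _ Hm)) as Hum.
    eapply is_meet_in_iso; [apply (equiv_is_meet_in HGF), Hum| | | |].
    1-3: apply (equiv_reindex_inverse HGF).
    apply eprime_reindex, Hm.
  - exists C, (G C d). split; [apply (equiv_eprime HGF), Hd|split].
    + apply (equiv_generic_in HGF), Hgen.
    + apply (equiv_discrete_in HGF), Hdisc.
Qed.

(** * Relative realizability triposes *)

Section RelativePCA.
Context {A : Type} (app : A -> A -> option A) (Ash : A -> Prop) (k s : A).
Context (Hk : forall a b : A, oapp app (oapp app (Some k) (Some a)) (Some b) = Some a).
Context (Hs : forall a b : A, oapp app (oapp app (Some s) (Some a)) (Some b) <> None).
Context (Hsc : forall a b c : A,
  oapp app (oapp app (oapp app (Some s) (Some a)) (Some b)) (Some c) =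
  oapp app (oapp app (Some a) (Some c)) (oapp app (Some b) (Some c))).

Lemma rel_pca_k1 : exists K1 : A -> A,
  forall a, app k a = Some (K1 a) /\ forall b, app (K1 a) b = Some a.
Proof.
  apply (functional_choice (fun a x => app k a = Some x /\ forall b, app x b = Some a)).
  intros a. pose proof (Hk a a) as H. simpl in H.
  destruct (app k a) as [x|] eqn:E; [|discriminate]. exists x. split; auto.
  intros b. pose proof (Hk a b) as H2. simpl in H2. rewrite E in H2. exact H2.
Qed.

Lemma rel_pca_s1 : exists S1 : A -> A, forall a, app s a = Some (S1 a).
Proof.
  apply (functional_choice (fun a x => app s a = Some x)). intros a.
  pose proof (Hs a a) as H. simpl in H.
  destruct (app s a) as [x|]; [eauto|]. simpl in H. congruence.
Qed.

Lemma rel_pca_s2 (S1 : A -> A) : (forall a, app s a = Some (S1 a)) ->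
  exists S2 : A -> A -> A, forall a b, app (S1 a) b = Some (S2 a b) /\
    forall c, app (S2 a b) c = oapp app (app a c) (app b c).
Proof.
  intros HS1.
  assert (H : forall p : A * A, exists y, app (S1 (fst p)) (snd p) = Some y /\
     forall c, app y c = oapp app (app (fst p) c) (app (snd p) c)).
  { intros [a b]. simpl. pose proof (Hs a b) as H. simpl in H. rewrite HS1 in H. simpl in H.
    destruct (app (S1 a) b) as [y|] eqn:E; [|congruence]. exists y. split; auto.
    intros c. pose proof (Hsc a b c) as H3. simpl in H3. rewrite HS1 in H3. simpl in H3.
    rewrite E in H3. exact H3. }
  destruct (functional_choice _ H) as [f Hf]. exists (fun a b => f (a, b)). intros a b. apply (Hf (a, b)).
Qed.

End RelativePCA.

Section Realizability.
Context {A : Type} (app : A -> A -> option A) (Ash : A -> Prop).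
Context (Hcl : forall a b c, Ash a -> Ash b -> app a b = Some c -> Ash c).
Context (k s : A) (Hk : Ash k) (Hs : Ash s).
Context (K1 : A -> A) (HK1 : forall a, app k a = Some (K1 a) /\ forall b, app (K1 a) b = Some a).
Context (S1 : A -> A) (HS1 : forall a, app s a = Some (S1 a)).
Context (S2 : A -> A -> A) (HS2 : forall a b, app (S1 a) b = Some (S2 a b) /\
   forall c, app (S2 a b) c = oapp app (app a c) (app b c)).

Lemma K1_designated a : Ash a -> Ash (K1 a).
Proof. intros Ha. eapply Hcl; [exact Hk|exact Ha|apply HK1]. Qed.

Lemma S2_designated a b : Ash a -> Ash b -> Ash (S2 a b).
Proof.
  intros Ha Hb. eapply Hcl; [|exact Hb|apply HS2]. eapply Hcl; [exact Hs|exact Ha|apply HS1].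
Qed.

Lemma K1E a b : app (K1 a) b = Some a.
Proof. apply HK1. Qed.
Lemma S2E a b c : app (S2 a b) c = oapp app (app a c) (app b c).
Proof. apply HS2. Qed.

Definition i_comb := S2 k k.
Lemma i_combE c : app i_comb c = Some c.
Proof. unfold i_comb. rewrite S2E, (proj1 (HK1 c)). apply K1E. Qed.
Lemma i_comb_designated : Ash i_comb.
Proof. apply S2_designated; auto. Qed.

Definition comp_comb (e1 e2 : A) := S2 (K1 e2) e1.
Lemma comp_combE e1 e2 a : app (comp_comb e1 e2) a = oapp app (Some e2) (app e1 a).
Proof. unfold comp_comb. rewrite S2E, K1E. reflexivity. Qed.
Lemma comp_comb_designated e1 e2 : Ash e1 -> Ash e2 -> Ash (comp_comb e1 e2).
Proof. intros; apply S2_designated, H; apply K1_designated; auto. Qed.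

Definition pair_comb (x y : A) := S2 (S2 i_comb (K1 x)) (K1 y).
Lemma pair_combE x y f : app (pair_comb x y) f = oapp app (app f x) (Some y).
Proof. unfold pair_comb. rewrite S2E, S2E, i_combE, K1E, K1E. reflexivity. Qed.

Definition fst_comb := S2 i_comb (K1 k).
Definition snd_comb := S2 i_comb (K1 (K1 i_comb)).
Lemma fst_combE x y : app fst_comb (pair_comb x y) = Some x.
Proof.
  unfold fst_comb. rewrite S2E, i_combE, K1E. simpl.
  rewrite pair_combE, (proj1 (HK1 x)). apply K1E.
Qed.
Lemma snd_combE x y : app snd_comb (pair_comb x y) = Some y.
Proof.
  unfold snd_comb. rewrite S2E, i_combE, K1E. simpl.
  rewrite pair_combE, K1E. apply i_combE.
Qed.
Lemma fst_comb_designated : Ash fst_comb.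
Proof. apply S2_designated; [apply i_comb_designated|apply K1_designated; auto]. Qed.
Lemma snd_comb_designated : Ash snd_comb.
Proof. apply S2_designated; [apply i_comb_designated|]. do 2 apply K1_designated. apply i_comb_designated. Qed.

Definition s_under (f g : A) := S2 (S2 (K1 s) f) g.
Definition k_under (f : A) := S2 (K1 k) f.
Lemma s_underE f g z x y :
  app f z = Some x -> app g z = Some y -> app (s_under f g) z = Some (S2 x y).
Proof. intros Ef Eg. unfold s_under. rewrite !S2E, K1E, Ef, Eg. simpl. rewrite HS1. apply HS2. Qed.
Lemma k_underE f z x : app f z = Some x -> app (k_under f) z = Some (K1 x).
Proof. intros Ef. unfold k_under. rewrite S2E, K1E, Ef. apply HK1. Qed.

Definition tuple_comb (r1 r2 : A) := s_under (s_under (K1 i_comb) (k_under r1)) (k_under r2).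
Lemma tuple_combE r1 r2 z x y :
  app r1 z = Some x -> app r2 z = Some y -> app (tuple_comb r1 r2) z = Some (pair_comb x y).
Proof.
  intros E1 E2. apply s_underE; [|apply k_underE, E2].
  apply s_underE; [apply K1E|apply k_underE, E1].
Qed.
Lemma tuple_comb_designated r1 r2 : Ash r1 -> Ash r2 -> Ash (tuple_comb r1 r2).
Proof.
  intros. unfold tuple_comb, s_under, k_under.
  repeat apply S2_designated; try apply K1_designated; auto; apply i_comb_designated.
Qed.

Let Q := rel_real_tripos app Ash.

#[local] Instance rt_indexed_preorder : indexed_preorder Q.
Proof.
  assert (Hid : forall I (a : I -> A -> Prop), rt_le app Ash a a).
  { intros I a. exists i_comb. split; [apply i_comb_designated|].
    intros i x h. exists x. split; [apply i_combE|exact h]. }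
  split; [|split; [|split; [|split]]].
  - exact Hid.
  - intros I a b c [e1 [A1 H1]] [e2 [A2 H2]].
    exists (comp_comb e1 e2). split; [apply comp_comb_designated; auto|].
    intros i x h. destruct (H1 i x h) as [y [Ey hy]]. destruct (H2 i y hy) as [z [Ez hz]].
    exists z. split; auto. rewrite comp_combE, Ey. exact Ez.
  - intros I J u a b [e [Ae He]]. exists e. split; auto. intros j x h. apply (He (u j) x h).
  - intros I a. split; apply Hid.
  - intros I J K u v a. split; apply Hid.
Qed.

Definition singleton {I} (h : I -> A) : ipred Q I := fun i a => a = h i.

Lemma singleton_eprime {I} (h : I -> A) : eprime (singleton h).
Proof.
  intros J K u v phi psi Hex [e1 [A1 He1]].
  (* in Q the existential quantifier is the union over the fibres of v *)
  assert (Hunion : ile psi (fun j a => exists kk, v kk = j /\ phi kk a)).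
  { apply (exists_elim _ _ _ _ Hex). exists i_comb. split; [apply i_comb_designated|].
    intros kk a ha. exists a. split; [apply i_combE|]. exists kk; auto. }
  destruct Hunion as [e2 [A2 He2]].
  destruct (functional_choice (fun j kk => v kk = j /\
      exists b, app (comp_comb e1 e2) (h (u j)) = Some b /\ phi kk b)) as [sec Hsec].
  { intros j. destruct (He1 j (h (u j)) eq_refl) as [b1 [E1 hb1]].
    destruct (He2 j b1 hb1) as [b2 [E2 [kk [hk hb2]]]]. exists kk. split; auto.
    exists b2. split; auto. rewrite comp_combE, E1. exact E2. }
  exists sec. split; [intros j; apply Hsec|].
  exists (comp_comb e1 e2). split; [apply comp_comb_designated; auto|].
  intros j a ->. destruct (Hsec j) as [_ [b [Eb hb]]]. exists b; auto.
Qed.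

Definition graph {I} (phi : I -> A -> Prop) := {p : I * A | phi (fst p) (snd p)}.

Lemma exists_graph_singleton {I} (phi : ipred Q I) :
  is_exists (fun p : graph phi => fst (proj1_sig p))
            (singleton (fun p : graph phi => snd (proj1_sig p))) phi.
Proof.
  intros chi. split.
  - intros [e [Ae He]]. exists e. split; auto. intros [[i a] hp] x ->. apply He, hp.
  - intros [e [Ae He]]. exists e. split; auto. intros i a hp. apply (He (exist _ (i, a) hp) a eq_refl).
Qed.

Lemma eprime_singleton {I} (pi : ipred Q I) : eprime pi -> exists h, iiso pi (singleton h).
Proof.
  intros Hp.
  destruct (Hp I (graph pi) (fun i => i) _ _ _ (exists_graph_singleton pi)) as [sec [Hsec [r [Ar Hr]]]].
  { apply reindex_id_drop; reflexivity. }
  exists (fun i => snd (proj1_sig (sec i))). split.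
  - exists r. split; [exact Ar|]. intros i a h. apply (Hr i a h).
  - exists i_comb. split; [apply i_comb_designated|]. intros i a ->.
    exists (snd (proj1_sig (sec i))). split; [apply i_combE|].
    pose proof (proj2_sig (sec i)) as H. simpl in H. rewrite Hsec in H. exact H.
Qed.

Lemma rt_enough_eprimes : enough_eprimes Q.
Proof.
  intros I phi. exists (graph phi), (fun p => fst (proj1_sig p)).
  exists (singleton (fun p : graph phi => snd (proj1_sig p))).
  split; [apply singleton_eprime|apply exists_graph_singleton].
Qed.

Lemma singleton_is_top_in I : is_top_in (@eprime Q) (singleton (fun _ : I => k)).
Proof.
  split; [apply singleton_eprime|]. intros a _. exists (K1 k). split; [apply K1_designated; auto|].
  intros i x _. exists k. split; [apply K1E|reflexivity].
Qed.

Lemma singleton_is_meet_in {I} (al be : I -> A) :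
  is_meet_in (@eprime Q) (singleton al) (singleton be) (singleton (fun i => pair_comb (al i) (be i))).
Proof.
  split; [apply singleton_eprime|split; [|split]].
  - exists fst_comb. split; [apply fst_comb_designated|].
    intros i x ->. exists (al i). split; [apply fst_combE|reflexivity].
  - exists snd_comb. split; [apply snd_comb_designated|].
    intros i x ->. exists (be i). split; [apply snd_combE|reflexivity].
  - intros x _ [e1 [A1 H1]] [e2 [A2 H2]].
    exists (tuple_comb e1 e2). split; [apply tuple_comb_designated; auto|].
    intros i a ha. destruct (H1 i a ha) as [y1 [E1 ->]]. destruct (H2 i a ha) as [y2 [E2 ->]].
    exists (pair_comb (al i) (be i)). split; [apply tuple_combE; auto|reflexivity].
Qed.

Lemma eprime_is_meet_in {I} (a b : ipred Q I) : eprime a -> eprime b ->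
  exists m, is_meet_in (@eprime Q) a b m /\
    forall J (u : J -> I), is_meet_in (@eprime Q) (ireidx u a) (ireidx u b) (ireidx u m).
Proof.
  intros Ha Hb. destruct (eprime_singleton a Ha) as [al Hal]. destruct (eprime_singleton b Hb) as [be Hbe].
  exists (singleton (fun i => pair_comb (al i) (be i))). split.
  - eapply is_meet_in_iso; [apply singleton_is_meet_in| | |apply iiso_refl|apply singleton_eprime];
      apply iiso_sym; auto.
  - intros J u.
    eapply is_meet_in_iso; [apply (singleton_is_meet_in (fun j => al (u j)) (fun j => be (u j)))|
                            | |apply iiso_refl|apply singleton_eprime].
    + apply iiso_sym, (reindex_iiso u _ _ Hal).
    + apply iiso_sym, (reindex_iiso u _ _ Hbe).
Qed.

Lemma rt_sub_finite_meets : sub_finite_meets (@eprime Q).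
Proof.
  split; [|split; [|split]].
  - intros I. exists (singleton (fun _ : I => k)). apply singleton_is_top_in.
  - intros I J u t Ht.
    assert (Hiso : iiso (singleton (fun _ : I => k)) t).
    { split; [apply Ht, singleton_eprime|apply singleton_is_top_in, Ht]. }
    eapply is_top_in_iso; [apply (singleton_is_top_in J)| |apply eprime_reindex, Ht].
    apply (reindex_iiso u _ _ Hiso).
  - intros I a b Ha Hb. destruct (eprime_is_meet_in a b Ha Hb) as [m [Hm _]]. exists m; exact Hm.
  - intros I J u a b m Ha Hb Hm.
    destruct (eprime_is_meet_in a b Ha Hb) as [m0 [Hm0 Hm0u]].
    eapply is_meet_in_iso; [apply (Hm0u J u)|apply iiso_refl|apply iiso_refl| |apply eprime_reindex, Hm].
    apply reindex_iiso, (is_meet_in_unique _ _ _ _ _ Hm0 Hm).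
Qed.

Lemma rt_discrete_generic : has_discrete_generic_in (@eprime Q).
Proof.
  exists A, (singleton (fun a => a)). split; [apply singleton_eprime|split].
  - intros B phi Hphi. destruct (eprime_singleton phi Hphi) as [h Hh]. exists h. exact Hh.
  - intros K J e f phi _ Hphi [q [_ Hq]].
    destruct (eprime_singleton phi Hphi) as [al [_ [r [_ Hr]]]].
    destruct (functional_choice (fun j w => phi j w)) as [w Hw].
    { intros j. destruct (Hr j (al j) eq_refl) as [w [_ hw]]. exists w; exact hw. }
    (* the [None] branch is junk: [q] is defined on [w (e kk)] *)
    exists (fun j => match app q (w j) with Some y => y | None => al j end).
    intros kk. destruct (Hq kk (w (e kk)) (Hw (e kk))) as [y [Ey hy]].
    rewrite Ey. exact hy.
Qed.

End Realizability.

Lemma rel_real_tripos_conditions {A} (app : A -> A -> option A) (Ash : A -> Prop) :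
  rel_pca app Ash ->
  indexed_preorder (rel_real_tripos app Ash) /\ realizability_conditions (rel_real_tripos app Ash).
Proof.
  intros [Hcl [k [s [Hk [Hs [Hk2 [Hs2 Hs3]]]]]]].
  destruct (rel_pca_k1 app k Hk2) as [K1 HK1].
  destruct (rel_pca_s1 app s Hs2) as [S1 HS1].
  destruct (rel_pca_s2 app s Hs2 Hs3 S1 HS1) as [S2 HS2].
  split; [|split; [|split]].
  - exact (rt_indexed_preorder app Ash Hcl k s Hk Hs K1 HK1 S1 HS1 S2 HS2).
  - exact (rt_enough_eprimes app Ash Hcl k s Hk Hs K1 HK1 S1 HS1 S2 HS2).
  - exact (rt_sub_finite_meets app Ash Hcl k s Hk Hs K1 HK1 S1 HS1 S2 HS2).
  - exact (rt_discrete_generic app Ash Hcl k s Hk Hs K1 HK1 S1 HS1 S2 HS2).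
Qed.

(** * From a discrete generic prime to a relative PCA *)

Section FromPrimes.
Context {P : IdxPreord} (HT : tripos P).
#[local] Instance : indexed_preorder P := tripos_indexed_preorder HT.
Context (Hen : enough_eprimes P) (Hfm : sub_finite_meets (@eprime P)).
Context (C : Type) (delta : ipred P C) (Hdelta : eprime delta).
Context (Hgen : forall B (phi : ipred P B), eprime phi -> exists f : B -> C, iiso phi (ireidx f delta)).
Context (Hdisc : discrete_in (@eprime P) delta).
Context (pr : C * C -> C).
Context (Hpr : is_meet_in (@eprime P) (ireidx fst delta) (ireidx snd delta) (ireidx pr delta)).

Definition delta_of {J} (x : J -> C) : ipred P J := ireidx x delta.
Definition delta_pair {J} (x y : J -> C) : ipred P J := delta_of (fun j => pr (x j, y j)).

Lemma delta_of_eprime {J} (x : J -> C) : eprime (delta_of x).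
Proof. apply eprime_reindex, Hdelta. Qed.

Lemma delta_of_ext {J} (x y : J -> C) : (forall j, x j = y j) -> delta_of x = delta_of y.
Proof. intros H. f_equal. apply functional_extensionality, H. Qed.

Lemma delta_of_reindex {J K} (x : J -> C) (v : K -> J) :
  iiso (ireidx v (delta_of x)) (delta_of (fun k => x (v k))).
Proof. apply iiso_sym, reindex_comp. reflexivity. Qed.

Lemma delta_pair_is_meet_in {J} (x y : J -> C) :
  is_meet_in (@eprime P) (delta_of x) (delta_of y) (delta_pair x y).
Proof.
  destruct Hfm as [_ [_ [_ Hmeet_rx]]].
  pose proof (Hmeet_rx _ _ (fun j => (x j, y j)) _ _ _
    (eprime_reindex fst _ Hdelta) (eprime_reindex snd _ Hdelta) Hpr) as H.
  eapply is_meet_in_iso; [exact H| | | |apply delta_of_eprime];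
    apply iiso_sym, reindex_comp; reflexivity.
Qed.

Lemma delta_pair_le_l {J} (x y : J -> C) : ile (delta_pair x y) (delta_of x).
Proof. apply (delta_pair_is_meet_in x y). Qed.

Lemma delta_pair_le_r {J} (x y : J -> C) : ile (delta_pair x y) (delta_of y).
Proof. apply (delta_pair_is_meet_in x y). Qed.

Lemma delta_pair_glb {J} (x y : J -> C) (z : ipred P J) :
  eprime z -> ile z (delta_of x) -> ile z (delta_of y) -> ile z (delta_pair x y).
Proof. intros. apply (delta_pair_is_meet_in x y); auto. Qed.

Lemma pr_injective p q : pr p = pr q -> p = q.
Proof.
  intros E.
  set (J := {c : C | exists p, pr p = c}).
  set (e := fun p : C * C => exist (fun c => exists p, pr p = c) (pr p) (ex_intro _ p eq_refl) : J).
  assert (He : forall j : J, exists p, e p = j).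
  { intros [c [p' <-]]. exists p'. reflexivity. }
  (* discreteness of delta lets both projections factor through pr *)
  assert (Hfactor : forall f : C * C -> C, ile (ireidx pr delta) (ireidx f delta) ->
            exists g : J -> C, forall p, g (e p) = f p).
  { intros f Hf. apply (Hdisc (C * C)%type J e f (ireidx (@proj1_sig C _) delta) He).
    - apply eprime_reindex, Hdelta.
    - eapply le_trans; [|exact Hf]. apply reindex_comp_merge. reflexivity. }
  destruct (Hfactor fst) as [g1 Hg1]; [apply Hpr|].
  destruct (Hfactor snd) as [g2 Hg2]; [apply Hpr|].
  assert (Eepq : e p = e q) by (apply subset_eq_compat, E).
  destruct p as [p1 p2], q as [q1 q2].
  pose proof (Hg1 (p1, p2)). pose proof (Hg1 (q1, q2)).
  pose proof (Hg2 (p1, p2)). pose proof (Hg2 (q1, q2)). simpl in *.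
  rewrite Eepq in *. f_equal; congruence.
Qed.

Definition designated (c : C) : Prop :=
  exists t : ipred P unit, is_top t /\ ile t (delta_of (fun _ : unit => c)).

Lemma designated_exists : exists d, designated d.
Proof.
  destruct Hfm as [Htop_in [Htop_in_rx _]].
  destruct (Htop_in unit) as [t' [Ht'p Ht']].
  destruct (Hgen _ _ Ht'p) as [f Hf].
  destruct (tripos_top HT unit) as [t Ht].
  destruct (Hen unit t) as [J [u [pi [Hpi Hex]]]].
  exists (f tt), t. split; [exact Ht|].
  assert (Htt' : ile t t').
  { apply (exists_elim u pi t t' Hex). apply (Htop_in_rx _ _ u t' (conj Ht'p Ht')), Hpi. }
  eapply le_trans; [exact Htt'|]. eapply le_trans; [apply Hf|].
  rewrite (delta_of_ext (fun _ => f tt) f); [apply le_refl|]. intros []; reflexivity.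
Qed.

Lemma designated_le (c : C) : designated c -> forall J (phi : ipred P J), ile phi (delta_of (fun _ : J => c)).
Proof.
  intros [t [Ht Hc]] J phi.
  eapply le_trans; [apply (tripos_top_reindex HT (fun _ : J => tt) t Ht)|].
  eapply le_trans; [apply reindex_mono, Hc|].
  apply reindex_comp_merge. reflexivity.
Qed.

Lemma designated_of_le (d c : C) :
  designated d -> ile (delta_of (fun _ : unit => d)) (delta_of (fun _ : unit => c)) -> designated c.
Proof. intros [t [Ht Hd]] Hdc. exists t; split; [exact Ht|]. eapply le_trans; eauto. Qed.

Lemma designated_pair a b : designated a -> designated b -> designated (pr (a, b)).
Proof.
  intros Ha Hb. destruct designated_exists as [d Hd]. apply (designated_of_le d); auto.
  apply (delta_pair_glb (fun _ => a) (fun _ => b)); [apply delta_of_eprime|..];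
    apply designated_le; auto.
Qed.

Lemma delta_pair_glb_designated {J} (c : C) (x : J -> C) (z : ipred P J) :
  designated c -> eprime z -> ile z (delta_of x) -> ile z (delta_pair (fun _ => c) x).
Proof. intros Hc Hz Hx. apply delta_pair_glb; auto. apply designated_le, Hc. Qed.

Definition app_sound (app : C -> C -> option C) : Prop :=
  forall J (x y d : J -> C),
    (forall j, app (x j) (y j) = Some (d j)) -> ile (delta_pair x y) (delta_of d).

Definition app_complete (app : C -> C -> option C) : Prop :=
  forall J (g h : J -> C), ile (delta_of g) (delta_of h) ->
    exists e, designated e /\ forall j, app e (g j) = Some (h j).

Section Equivalence.
Context (app : C -> C -> option C) (Hsound : app_sound app) (Hcomplete : app_complete app).

Let Q := rel_real_tripos app designated.

Definition image_family {I J} (u : J -> I) (h : J -> C) : I -> C -> Prop :=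
  fun i c => exists j, u j = i /\ h j = c.

Lemma rt_le_of_le {I J1 J2} {u1 : J1 -> I} {h1 : J1 -> C} {u2 : J2 -> I} {h2 : J2 -> C}
  {psi1 psi2 : ipred P I} (Phi1 Phi2 : I -> C -> Prop) :
  is_exists u1 (delta_of h1) psi1 -> is_exists u2 (delta_of h2) psi2 -> ile psi1 psi2 ->
  (forall i c, Phi1 i c -> image_family u1 h1 i c) ->
  (forall i c, image_family u2 h2 i c -> Phi2 i c) ->
  rt_le app designated Phi1 Phi2.
Proof.
  intros E1 E2 Hle F1 F2.
  assert (H1 : ile (delta_of h1) (ireidx u1 psi2)).
  { eapply le_trans; [apply (exists_unit _ _ _ E1)|]. apply reindex_mono, Hle. }
  pose proof (tripos_bc_exists HT _ _ _ _ u1 u2 pb2 pb1 (PB_is_pullback u1 u2) _ _ E2) as HB.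
  destruct (delta_of_eprime h1 J1 (PB u1 u2) (fun j => j) pb1 _ _ HB) as [sec [Hsec1 Hsec2]].
  { eapply le_trans; [apply reindex_id_drop; reflexivity|exact H1]. }
  destruct (Hcomplete J1 h1 (fun j => h2 (pb2 (sec j)))) as [e [He Hape]].
  { eapply le_trans; [apply reindex_id_add; reflexivity|].
    eapply le_trans; [exact Hsec2|].
    eapply le_trans; [apply (reindex_comp_merge pb2 sec (fun j => pb2 (sec j))); reflexivity|].
    apply reindex_comp_merge. reflexivity. }
  exists e. split; [exact He|]. intros i a Ha. destruct (F1 i a Ha) as [j [<- <-]].
  exists (h2 (pb2 (sec j))). split; [apply Hape|]. apply F2. exists (pb2 (sec j)). split; [|reflexivity].
  rewrite <- (pb_comm u1 u2 (sec j)), Hsec1. reflexivity.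
Qed.

Lemma le_of_rt_le {I J1 J2} {u1 : J1 -> I} {h1 : J1 -> C} {u2 : J2 -> I} {h2 : J2 -> C}
  {psi1 psi2 : ipred P I} (Phi1 Phi2 : I -> C -> Prop) :
  is_exists u1 (delta_of h1) psi1 -> is_exists u2 (delta_of h2) psi2 ->
  (forall i c, image_family u1 h1 i c -> Phi1 i c) ->
  (forall i c, Phi2 i c -> image_family u2 h2 i c) ->
  rt_le app designated Phi1 Phi2 -> ile psi1 psi2.
Proof.
  intros E1 E2 F1 F2 [e [He Hre]].
  destruct (functional_choice (fun j1 j2 => app e (h1 j1) = Some (h2 j2) /\ u2 j2 = u1 j1)) as [j2 Hj2].
  { intros j1. destruct (Hre (u1 j1) (h1 j1) (F1 _ _ (ex_intro _ j1 (conj eq_refl eq_refl)))) as [b [hb1 hb2]].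
    destruct (F2 _ _ hb2) as [j [hj1 hj2]]. exists j. subst. auto. }
  apply (exists_elim _ _ _ _ E1).
  eapply le_trans;
    [apply (delta_pair_glb_designated e h1); [auto|apply delta_of_eprime|apply le_refl]|].
  eapply le_trans; [apply (Hsound J1 (fun _ => e) h1 (fun j => h2 (j2 j))), Hj2|].
  eapply le_trans; [apply (reindex_comp_split h2 j2); reflexivity|].
  eapply le_trans; [apply reindex_mono, (exists_unit _ _ _ E2)|].
  apply reindex_comp_merge. intros j. symmetry. apply Hj2.
Qed.

Lemma app_identity_rt_le {I} (Phi : I -> C -> Prop) : rt_le app designated Phi Phi.
Proof.
  destruct (Hcomplete C (fun c => c) (fun c => c) (le_refl _)) as [e [He Hid]].
  exists e. split; [exact He|]. intros i c h. exists c. split; auto.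
Qed.

Record presentation {I} (phi : ipred P I) := {
  pres_dom : Type;
  pres_idx : pres_dom -> I;
  pres_code : pres_dom -> C;
  pres_exists : is_exists pres_idx (delta_of pres_code) phi }.
Arguments pres_dom {I phi}.
Arguments pres_idx {I phi}.
Arguments pres_code {I phi}.
Arguments pres_exists {I phi}.

Lemma presentation_exists {I} (phi : ipred P I) : exists _ : presentation phi, True.
Proof.
  destruct (Hen I phi) as [J [u [pi [Hpi Hex]]]]. destruct (Hgen _ _ Hpi) as [h Hh].
  exists {| pres_exists := is_exists_iso_source _ _ _ _ Hex Hh |}. constructor.
Qed.

Definition choose_presentation {I} (phi : ipred P I) : presentation phi :=
  proj1_sig (constructive_indefinite_description _ (presentation_exists phi)).

Lemma choose_presentation_exists {I} (phi : ipred P I) :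
  is_exists (pres_idx (choose_presentation phi)) (delta_of (pres_code (choose_presentation phi))) phi.
Proof. apply pres_exists. Qed.

Definition to_rt (I : Type) (phi : ipred P I) : I -> C -> Prop :=
  image_family (pres_idx (choose_presentation phi)) (pres_code (choose_presentation phi)).

Definition graph_idx {I} {Phi : I -> C -> Prop} (p : graph Phi) : I := fst (proj1_sig p).
Definition graph_code {I} {Phi : I -> C -> Prop} (p : graph Phi) : C := snd (proj1_sig p).

Definition of_rt (I : Type) (Phi : I -> C -> Prop) : ipred P I :=
  proj1_sig (constructive_indefinite_description _
    (tripos_exists HT (@graph_idx I Phi) (delta_of (@graph_code I Phi)))).

Lemma of_rt_exists {I} (Phi : I -> C -> Prop) :
  is_exists (@graph_idx I Phi) (delta_of (@graph_code I Phi)) (of_rt I Phi).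
Proof. exact (proj2_sig (constructive_indefinite_description _ _)). Qed.

Lemma image_family_graph_inv {I} {Phi : I -> C -> Prop} {i c} :
  image_family (@graph_idx I Phi) (@graph_code I Phi) i c -> Phi i c.
Proof. intros [[[i' c'] h] [<- <-]]. exact h. Qed.

Lemma image_family_graph_intro {I} {Phi : I -> C -> Prop} {i c} :
  Phi i c -> image_family (@graph_idx I Phi) (@graph_code I Phi) i c.
Proof. intros h. exists (exist _ (i, c) h). split; reflexivity. Qed.

Lemma exists_pullback {I J J2} (u : J -> I) (u2 : J2 -> I) (h2 : J2 -> C) (psi : ipred P I) :
  is_exists u2 (delta_of h2) psi ->
  is_exists (@pb1 _ _ _ u u2) (delta_of (fun p => h2 (pb2 p))) (ireidx u psi).
Proof.
  intros H.
  eapply is_exists_iso_source; [exact (tripos_bc_exists HT _ _ _ _ u u2 pb2 pb1 (PB_is_pullback u u2) _ _ H)|].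
  apply delta_of_reindex.
Qed.

Lemma image_family_pullback {I J J2} (u : J -> I) (u2 : J2 -> I) (h2 : J2 -> C) j c :
  image_family (@pb1 _ _ _ u u2) (fun p => h2 (pb2 p)) j c <-> image_family u2 h2 (u j) c.
Proof.
  split.
  - intros [p [<- <-]]. exists (pb2 p). split; auto. symmetry. apply pb_comm.
  - intros [j2 [e1 <-]]. exists (exist _ (j, j2) (eq_sym e1)). split; reflexivity.
Qed.

Lemma to_rt_pseudonatural : @pseudonatural P Q to_rt.
Proof.
  split.
  - intros I a b Hab.
    exact (rt_le_of_le _ _ (choose_presentation_exists _) (choose_presentation_exists _) Hab
             (fun _ _ h => h) (fun _ _ h => h)).
  - intros I J u a.
    pose proof (exists_pullback u _ _ _ (choose_presentation_exists a)) as Hpb.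
    split.
    + apply (rt_le_of_le _ _ (choose_presentation_exists _) Hpb (le_refl _) (fun _ _ h => h)).
      intros j c H. apply image_family_pullback, H.
    + apply (rt_le_of_le _ _ Hpb (choose_presentation_exists _) (le_refl _)); [|exact (fun _ _ h => h)].
      intros j c H. apply image_family_pullback, H.
Qed.

Lemma of_rt_pseudonatural : @pseudonatural Q P of_rt.
Proof.
  split.
  - intros I Phi1 Phi2 H.
    apply (le_of_rt_le Phi1 Phi2 (of_rt_exists Phi1) (of_rt_exists Phi2) (fun _ _ => image_family_graph_inv)
               (fun _ _ => image_family_graph_intro) H).
  - intros I J u Phi.
    pose proof (exists_pullback u _ _ _ (of_rt_exists Phi)) as Hpb.
    split.
    + apply (le_of_rt_le (fun j c => Phi (u j) c) (fun j c => Phi (u j) c)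
               (of_rt_exists _) Hpb); [| |apply app_identity_rt_le].
      * intros j c; exact image_family_graph_inv.
      * intros j c H. apply image_family_pullback, image_family_graph_intro, H.
    + apply (le_of_rt_le (fun j c => Phi (u j) c) (fun j c => Phi (u j) c)
               Hpb (of_rt_exists _)); [| |apply app_identity_rt_le].
      * intros j c H. apply image_family_graph_inv, image_family_pullback, H.
      * intros j c; exact image_family_graph_intro.
Qed.

Theorem rt_equivalent : ip_equivalent P Q.
Proof.
  exists to_rt, of_rt. split; [exact to_rt_pseudonatural|split; [exact of_rt_pseudonatural|split]].
  - intros I a. split.
    + apply (le_of_rt_le (to_rt I a) (to_rt I a) (of_rt_exists _) (choose_presentation_exists _));
        [intros i c; exact image_family_graph_inv|auto|apply app_identity_rt_le].
    + apply (le_of_rt_le (to_rt I a) (to_rt I a) (choose_presentation_exists _) (of_rt_exists _));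
        [auto|intros i c; exact image_family_graph_intro|apply app_identity_rt_le].
  - intros I Phi. split.
    + apply (rt_le_of_le _ _ (choose_presentation_exists (of_rt I Phi)) (of_rt_exists Phi) (le_refl _));
        [auto|intros i c; exact image_family_graph_inv].
    + apply (rt_le_of_le _ _ (of_rt_exists Phi) (choose_presentation_exists (of_rt I Phi)) (le_refl _));
        [intros i c; exact image_family_graph_intro|auto].
Qed.

End Equivalence.

Section Codes.
Context (Gam : ipred P (C * C)) (HGam : is_imp (ireidx fst delta) (ireidx snd delta) Gam).
Context (JR : Type) (uR : JR -> C * C) (hR : JR -> C) (HR : is_exists uR (ireidx hR delta) Gam).

(* [Gam] covers the implications [delta a => delta b]; its presentation as an
   existential of a prime singles out the codes [e] realizing them. *)
Definition codes (a b e : C) : Prop := exists r, uR r = (a, b) /\ hR r = e.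

Lemma is_imp_delta_of {J} (g h : J -> C) :
  is_imp (delta_of g) (delta_of h) (ireidx (fun j => (g j, h j)) Gam).
Proof.
  eapply (is_imp_iso HT); [apply (tripos_imp_reindex HT _ _ _ _ HGam)| |];
    apply iiso_sym, reindex_comp; reflexivity.
Qed.

Lemma codes_sound {J} (a b e : J -> C) :
  (forall j, codes (a j) (b j) (e j)) -> ile (delta_pair e a) (delta_of b).
Proof.
  intros H. destruct (functional_choice _ H) as [r Hr].
  apply (imp_elim HT _ _ _ _ (is_imp_delta_of a b)); [|apply delta_pair_le_r].
  eapply le_trans; [apply delta_pair_le_l|].
  eapply le_trans; [apply (reindex_comp_split hR r e); intros j; symmetry; apply Hr|].
  eapply le_trans; [apply reindex_mono, (exists_unit _ _ _ HR)|].
  apply reindex_comp_merge. intros j. destruct (Hr j) as [-> _]. reflexivity.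
Qed.

Lemma codes_functional a b1 b2 e : codes a b1 e -> codes a b2 e -> b1 = b2.
Proof.
  intros H1 H2.
  (* by discreteness, all codes with source [a] and name [e] have one target *)
  set (K := {r : JR | fst (uR r) = a /\ hR r = e}).
  set (f := fun k : K => snd (uR (proj1_sig k))).
  destruct (Hdisc K unit (fun _ => tt) f (delta_pair (fun _ : unit => e) (fun _ => a))) as [g Hg].
  - intros []. destruct H1 as [r [h1 h2]]. exists (exist _ r (conj (f_equal fst h1) h2)). reflexivity.
  - apply delta_of_eprime.
  - eapply le_trans; [apply (reindex_comp_merge _ _ (fun _ : K => pr (e, a))); reflexivity|].
    apply (codes_sound (fun _ => a) f (fun _ => e)).
    intros [r [h1 h2]]. exists r. split; auto. unfold f; simpl. rewrite <- h1. destruct (uR r); reflexivity.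
  - destruct H1 as [r1 [h1 h2]], H2 as [r2 [h3 h4]].
    pose proof (Hg (exist _ r1 (conj (f_equal fst h1) h2))) as g1.
    pose proof (Hg (exist _ r2 (conj (f_equal fst h3) h4))) as g2.
    unfold f in g1, g2; simpl in g1, g2. rewrite h1 in g1. rewrite h3 in g2. simpl in *. congruence.
Qed.

Lemma codes_complete {J} (g h : J -> C) :
  ile (delta_of g) (delta_of h) -> exists e, designated e /\ forall j, codes (g j) (h j) e.
Proof.
  intros Hgh. destruct designated_exists as [d Hd].
  destruct (classic (inhabited J)) as [[j0]|HJ].
  2:{ exists d. split; auto. intros j. exfalso. apply HJ. constructor. exact j. }
  set (gh := fun j => (g j, h j)).
  set (dJ := ireidx (fun _ : J => tt) (delta_of (fun _ : unit => d))).
  assert (HdJ : ile dJ (ireidx gh Gam)).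
  { apply (imp_intro HT _ _ _ _ (is_imp_delta_of g h)). intros w _ hw. exact (le_trans _ _ _ hw Hgh). }
  pose proof (tripos_bc_exists HT _ _ _ _ gh uR pb2 pb1 (PB_is_pullback gh uR) _ _ HR) as HB.
  destruct (delta_of_eprime (fun _ : unit => d) J (PB gh uR) (fun _ => tt) pb1 _ _ HB HdJ)
    as [sec [Hsec Hle]].
  set (f := fun j => hR (pb2 (sec j))).
  assert (Hf : ile dJ (delta_of f)).
  { eapply le_trans; [exact Hle|].
    eapply le_trans; [apply (reindex_comp_merge pb2 sec (fun j => pb2 (sec j))); reflexivity|].
    apply reindex_comp_merge. reflexivity. }
  (* discreteness forces the chosen codes [f j] to be one constant *)
  destruct (Hdisc J unit (fun _ => tt) f (delta_of (fun _ : unit => d))) as [c Hc].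
  - intros []. exists j0. reflexivity.
  - apply delta_of_eprime.
  - exact Hf.
  - exists (c tt). split.
    + apply (designated_of_le d); auto.
      eapply le_trans;
        [apply (reindex_retract_add (fun _ : unit => j0) (fun _ : J => tt)); intros []; reflexivity|].
      eapply le_trans; [apply reindex_mono, Hf|].
      apply reindex_comp_merge. intros []. apply Hc.
    + intros j. exists (pb2 (sec j)). split.
      * rewrite <- (pb_comm gh uR (sec j)), Hsec. reflexivity.
      * exact (eq_sym (Hc j)).
Qed.

Lemma designated_unique_trivial :
  (forall x y, designated x -> designated y -> x = y) -> forall a b : C, a = b.
Proof.
  intros Heq a b.
  destruct (codes_complete pr fst) as [e1 [A1 H1]]; [apply Hpr|].
  destruct (codes_complete pr snd) as [e2 [A2 H2]]; [apply Hpr|].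
  destruct (codes_complete (fun c : C => c) (fun c => c)) as [e3 [A3 H3]]; [apply le_refl|].
  assert (e1 = e3) by auto. assert (e2 = e3) by auto. subst.
  pose proof (codes_functional _ _ _ _ (H1 (a, b)) (H3 (pr (a, b)))).
  pose proof (codes_functional _ _ _ _ (H2 (a, b)) (H3 (pr (a, b)))). simpl in *. congruence.
Qed.

Lemma degenerate_rel_pca : (forall x y, designated x -> designated y -> x = y) ->
  exists app, rel_pca app designated /\ app_sound app /\ app_complete app.
Proof.
  intros Heq. pose proof (designated_unique_trivial Heq) as Htriv. destruct designated_exists as [d Hd].
  exists (fun x _ => Some x). split; [split|split].
  - intros a b c Ha _ E. injection E as <-. exact Ha.
  - exists d, d. split; [auto|split; [auto|split; [|split]]]; simpl.
    + intros a b. f_equal. apply Htriv.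
    + discriminate.
    + intros a b c. f_equal. apply Htriv.
  - intros J x y e H. rewrite (delta_of_ext e x); [apply delta_pair_le_l|].
    intros j. specialize (H j). injection H. auto.
  - intros J g h _. exists d. split; auto. intros j. f_equal. apply Htriv.
Qed.

Section Closures.
Context (T1 T2 : C) (HT1 : designated T1) (HT2 : designated T2) (HT12 : T1 <> T2).

(* A closure [pr (e, t)] applied to [y] runs the code [e] on [pr (y, t)], except
   that over the environments [s_env a b] it computes [a y (b y)] literally: this
   makes the equation of [s] hold on the nose. *)
Definition s_env (a b : C) : C := pr (T1, pr (a, b)).
Definition is_s_env (t : C) : Prop := exists a b, t = s_env a b.
Definition tag_env (a : C) : C := pr (T2, a).
Definition nil_env : C := tag_env T2.

Lemma tag_env_not_s_env a : ~ is_s_env (tag_env a).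
Proof. intros [x [y E]]. apply pr_injective in E. injection E as E _. auto. Qed.

Lemma s_env_injective a b a' b' : s_env a b = s_env a' b' -> a = a' /\ b = b'.
Proof.
  intros E. apply pr_injective in E. injection E as E.
  apply pr_injective in E. injection E as -> ->. auto.
Qed.

Inductive evals : C -> C -> C -> Prop :=
| evals_code e t y d : ~ is_s_env t -> codes (pr (y, t)) d e -> evals (pr (e, t)) y d
| evals_s e a b y x1 y1 d : evals a y x1 -> evals b y y1 -> evals x1 y1 d ->
    codes (pr (y, s_env a b)) d e -> evals (pr (e, s_env a b)) y d.

Definition runs (x y d : C) : Prop := exists e t, x = pr (e, t) /\ codes (pr (y, t)) d e.

Lemma evals_runs x y d : evals x y d -> runs x y d.
Proof. intros H; destruct H; eexists; eexists; split; eauto. Qed.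

Lemma runs_functional x y d1 d2 : runs x y d1 -> runs x y d2 -> d1 = d2.
Proof.
  intros [e [t [-> H1]]] [e' [t' [E2 H2]]]. apply pr_injective in E2.
  injection E2 as -> ->. eapply codes_functional; eauto.
Qed.

Lemma evals_functional x y d1 d2 : evals x y d1 -> evals x y d2 -> d1 = d2.
Proof. intros H1 H2. eapply runs_functional; apply evals_runs; eauto. Qed.

Lemma runs_sound {J} (x y d : J -> C) :
  (forall j, runs (x j) (y j) (d j)) -> ile (delta_pair x y) (delta_of d).
Proof.
  intros H.
  destruct (functional_choice (fun j et => x j = pr (fst et, snd et) /\
      codes (pr (y j, snd et)) (d j) (fst et))) as [et Het].
  { intros j. destruct (H j) as [e [t [h1 h2]]]. exists (e, t). auto. }
  set (e := fun j => fst (et j)). set (t := fun j => snd (et j)).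
  assert (Hx : ile (delta_pair x y) (delta_pair e t)).
  { eapply le_trans; [apply delta_pair_le_l|].
    rewrite (delta_of_ext x (fun j => pr (e j, t j))); [apply le_refl|apply Het]. }
  eapply le_trans; [|apply (codes_sound (fun j => pr (y j, t j)) d e (fun j => proj2 (Het j)))].
  apply delta_pair_glb; [apply delta_of_eprime|exact (le_trans _ _ _ Hx (delta_pair_le_l _ _))|].
  apply (delta_pair_glb y t); [apply delta_of_eprime|apply delta_pair_le_r|].
  exact (le_trans _ _ _ Hx (delta_pair_le_r _ _)).
Qed.

Definition closure_app (x y : C) : option C :=
  match excluded_middle_informative (exists d, evals x y d) with
  | left H => Some (proj1_sig (constructive_indefinite_description _ H))
  | right _ => None
  end.

Lemma closure_app_of_evals x y d : evals x y d -> closure_app x y = Some d.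
Proof.
  intros H. unfold closure_app. destruct (excluded_middle_informative _) as [H'|H'].
  - f_equal. destruct (constructive_indefinite_description _ H') as [d' Hd']. simpl.
    eapply evals_functional; eauto.
  - exfalso; apply H'; eauto.
Qed.

Lemma evals_of_closure_app x y d : closure_app x y = Some d -> evals x y d.
Proof.
  unfold closure_app. destruct (excluded_middle_informative _) as [H'|H']; [|discriminate].
  intros E. injection E as <-. apply proj2_sig.
Qed.

Lemma closure_app_sound : app_sound closure_app.
Proof.
  intros J x y d H. apply runs_sound. intros j. apply evals_runs, evals_of_closure_app, H.
Qed.

Lemma closure_code {J} (y t d : J -> C) :
  (forall j, ~ is_s_env (t j)) -> ile (delta_pair y t) (delta_of d) ->
  exists e, designated e /\ forall j, closure_app (pr (e, t j)) (y j) = Some (d j).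
Proof.
  intros Ht Hle. destruct (codes_complete (fun j => pr (y j, t j)) d Hle) as [e [He Hc]].
  exists e. split; [exact He|]. intros j. apply closure_app_of_evals, evals_code; auto.
Qed.

Lemma nil_env_designated : designated nil_env.
Proof. apply designated_pair; auto. Qed.

Lemma closure_app_complete : app_complete closure_app.
Proof.
  intros J g h Hgh.
  destruct (closure_code g (fun _ => nil_env) h) as [e [He Happ]].
  - intros _. apply tag_env_not_s_env.
  - eapply le_trans; [apply delta_pair_le_l|exact Hgh].
  - exists (pr (e, nil_env)). split; [apply designated_pair; auto; apply nil_env_designated|exact Happ].
Qed.

Lemma closure_app_closed a b c :
  designated a -> designated b -> closure_app a b = Some c -> designated c.
Proof.
  intros Ha Hb E. destruct designated_exists as [d Hd]. apply (designated_of_le d); auto.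
  eapply le_trans; [|apply (closure_app_sound unit (fun _ => a) (fun _ => b) (fun _ => c) (fun _ => E))].
  apply delta_pair_glb; [apply delta_of_eprime|apply designated_le; auto..].
Qed.

Lemma curry_code e2 : designated e2 ->
  exists e1, designated e1 /\ forall a, closure_app (pr (e1, nil_env)) a = Some (pr (e2, tag_env a)).
Proof.
  intros He2. apply (closure_code (fun a => a) (fun _ => nil_env)); [intros; apply tag_env_not_s_env|].
  apply delta_pair_glb_designated; [auto|apply delta_of_eprime|].
  apply (delta_pair_glb_designated T2 (fun a => a)); [auto|apply delta_of_eprime|apply delta_pair_le_l].
Qed.

Lemma k_code : exists e, designated e /\ forall a b, closure_app (pr (e, tag_env a)) b = Some a.
Proof.
  destruct (closure_code (@snd C C) (fun q => tag_env (fst q)) fst) as [e [He Happ]].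
  - intros q. apply tag_env_not_s_env.
  - eapply le_trans; [apply delta_pair_le_r|]. apply (delta_pair_le_r (fun _ => T2) fst).
  - exists e. split; [exact He|]. intros a b. exact (Happ (a, b)).
Qed.

Record s_redex := {
  sr_a : C; sr_b : C; sr_c : C; sr_x : C; sr_y : C; sr_d : C;
  sr_ac : runs sr_a sr_c sr_x; sr_bc : runs sr_b sr_c sr_y; sr_xy : runs sr_x sr_y sr_d }.

Lemma s_code : exists e, designated e /\ forall a b c x y d,
  runs a c x -> runs b c y -> runs x y d -> codes (pr (c, s_env a b)) d e.
Proof.
  destruct (codes_complete (fun q : s_redex => pr (sr_c q, s_env (sr_a q) (sr_b q))) sr_d)
    as [e [He Hc]].
  - set (z := delta_pair sr_c (fun q => s_env (sr_a q) (sr_b q))).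
    assert (Hz : eprime z) by apply delta_of_eprime.
    assert (Hzc : ile z (delta_of sr_c)) by apply delta_pair_le_l.
    assert (Hzab : ile z (delta_pair sr_a sr_b)).
    { eapply le_trans; [apply delta_pair_le_r|]. apply (delta_pair_le_r (fun _ => T1)). }
    assert (Hza : ile z (delta_of sr_a)) by exact (le_trans _ _ _ Hzab (delta_pair_le_l _ _)).
    assert (Hzb : ile z (delta_of sr_b)) by exact (le_trans _ _ _ Hzab (delta_pair_le_r _ _)).
    assert (Hzx : ile z (delta_of sr_x)).
    { eapply le_trans; [|apply (runs_sound sr_a sr_c sr_x sr_ac)]. apply delta_pair_glb; auto. }
    assert (Hzy : ile z (delta_of sr_y)).
    { eapply le_trans; [|apply (runs_sound sr_b sr_c sr_y sr_bc)]. apply delta_pair_glb; auto. }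
    eapply le_trans; [|apply (runs_sound sr_x sr_y sr_d sr_xy)]. apply delta_pair_glb; auto.
  - exists e. split; [exact He|]. intros a b c x y d Hac Hbc Hxy.
    exact (Hc {| sr_ac := Hac; sr_bc := Hbc; sr_xy := Hxy |}).
Qed.

Lemma s_closure_app eS a b c :
  (forall a b c x y d, runs a c x -> runs b c y -> runs x y d -> codes (pr (c, s_env a b)) d eS) ->
  closure_app (pr (eS, s_env a b)) c = oapp closure_app (closure_app a c) (closure_app b c).
Proof.
  intros HeS. destruct (closure_app (pr (eS, s_env a b)) c) as [d|] eqn:E.
  - apply evals_of_closure_app in E.
    remember (pr (eS, s_env a b)) as X eqn:EX.
    destruct E as [e t y d' Ht _|e a' b' y x1 y1 d' G1 G2 G3 _];
      apply pr_injective in EX; injection EX as -> Et.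
    + exfalso. apply Ht. exists a, b. exact Et.
    + apply s_env_injective in Et as [-> ->].
      rewrite (closure_app_of_evals _ _ _ G1), (closure_app_of_evals _ _ _ G2).
      symmetry. apply closure_app_of_evals, G3.
  - destruct (closure_app a c) as [x|] eqn:E1; [|reflexivity].
    destruct (closure_app b c) as [y|] eqn:E2; [|reflexivity].
    simpl. destruct (closure_app x y) as [d|] eqn:E3; [|reflexivity].
    apply evals_of_closure_app in E1, E2, E3. rewrite <- E.
    apply closure_app_of_evals. apply (evals_s _ _ _ _ _ _ _ E1 E2 E3).
    exact (HeS _ _ _ _ _ _ (evals_runs _ _ _ E1) (evals_runs _ _ _ E2) (evals_runs _ _ _ E3)).
Qed.

Lemma closure_app_rel_pca : rel_pca closure_app designated.
Proof.
  split; [exact closure_app_closed|].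
  destruct k_code as [eK [HeK HK]]. destruct (curry_code eK HeK) as [ek [Hek Hk]].
  destruct s_code as [eS [HeS HS]].
  destruct (closure_code (@snd C C) (fun q => tag_env (fst q)) (fun q => pr (eS, s_env (fst q) (snd q))))
    as [es1 [Hes1 Hs1']].
  { intros q. apply tag_env_not_s_env. }
  { apply delta_pair_glb_designated; [auto|apply delta_of_eprime|].
    apply delta_pair_glb_designated; [auto|apply delta_of_eprime|].
    apply delta_pair_glb; [apply delta_of_eprime| |apply delta_pair_le_l].
    eapply le_trans; [apply delta_pair_le_r|]. apply (delta_pair_le_r (fun _ => T2) fst). }
  assert (Hs1 : forall a b, closure_app (pr (es1, tag_env a)) b = Some (pr (eS, s_env a b)))
    by (intros a b; exact (Hs1' (a, b))).
  destruct (curry_code es1 Hes1) as [es [Hes Hs]].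
  exists (pr (ek, nil_env)), (pr (es, nil_env)).
  split; [apply designated_pair; auto; apply nil_env_designated|].
  split; [apply designated_pair; auto; apply nil_env_designated|].
  split; [|split]; simpl; intros a b; rewrite ?Hk, ?Hs; simpl; rewrite ?HK, ?Hs1; simpl.
  - reflexivity.
  - discriminate.
  - intros c. apply s_closure_app, HS.
Qed.

End Closures.

Lemma codes_rel_pca : exists app, rel_pca app designated /\ app_sound app /\ app_complete app.
Proof.
  destruct (classic (exists T1 T2, designated T1 /\ designated T2 /\ T1 <> T2))
    as [[T1 [T2 [H1 [H2 H12]]]]|Hn].
  - exists (closure_app T1). split; [eapply closure_app_rel_pca; eauto|].
    split; [apply closure_app_sound|eapply closure_app_complete; eauto].
  - apply degenerate_rel_pca. intros x y Hx Hy. apply NNPP. intros Hxy. apply Hn. eauto.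
Qed.

End Codes.

Lemma from_primes_rel_pca : exists (A : Type) (app : A -> A -> option A) (Ash : A -> Prop),
  rel_pca app Ash /\ ip_equivalent P (rel_real_tripos app Ash).
Proof.
  destruct (tripos_imp HT (ireidx fst delta) (ireidx snd delta)) as [Gam HGam].
  destruct (Hen _ Gam) as [JR [uR [pi [Hpi Hex]]]].
  destruct (Hgen _ pi Hpi) as [hR HhR].
  destruct (codes_rel_pca Gam HGam JR uR hR (is_exists_iso_source _ _ _ _ Hex HhR))
    as [app [Hpca [Hsound Hcomplete]]].
  exists C, app, designated. split; [exact Hpca|apply rt_equivalent; auto].
Qed.

End FromPrimes.

Lemma realizability_conditions_rel_pca {P : IdxPreord} : tripos P -> realizability_conditions P ->
  exists (A : Type) (app : A -> A -> option A) (Ash : A -> Prop),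
    rel_pca app Ash /\ ip_equivalent P (rel_real_tripos app Ash).
Proof.
  intros HT [Hen [Hfm [C [delta [Hdelta [Hgen Hdisc]]]]]].
  pose proof (tripos_indexed_preorder HT) as HP.
  pose proof (eprime_reindex (@fst C C) _ Hdelta) as H1.
  pose proof (eprime_reindex (@snd C C) _ Hdelta) as H2.
  destruct (proj1 (proj2 (proj2 Hfm)) _ _ _ H1 H2) as [m Hm].
  destruct (Hgen _ m (proj1 Hm)) as [pr Hpr].
  apply (from_primes_rel_pca HT Hen Hfm C delta Hdelta Hgen Hdisc pr).
  eapply is_meet_in_iso; [exact Hm|apply iiso_refl|apply iiso_refl|exact Hpr|apply eprime_reindex, Hdelta].
Qed.

Theorem theorem9p5 (P : IdxPreord) :
  tripos P ->
  ((exists (A : Type) (app : A -> A -> option A) (Ash : A -> Prop),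
       rel_pca app Ash /\ ip_equivalent P (rel_real_tripos app Ash)) <->
   (enough_eprimes P /\
    sub_finite_meets (@eprime P) /\
    has_discrete_generic_in (@eprime P))).
Proof.
  intros HT. pose proof (tripos_indexed_preorder HT) as HP. split.
  - intros [A [app [Ash [Hpca [F [G HFG]]]]]].
    destruct (rel_real_tripos_conditions app Ash Hpca) as [HQ Hcond].
    exact (realizability_conditions_transfer F G HFG Hcond).
  - apply realizability_conditions_rel_pca, HT.
Qed.
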